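(* In the algebra $U_q(L(\mathfrak{sl}_2))$ the following identities hold: $$R^3L-[3]_qR^2LR+[3]_qRLR^2-LR^3=(q-q^{-1})(q^2-q^{-2})(q^3-q^{-3})\,(cc^*K_1R^2K_1-bb^*K_0R^2K_0),$$ $$L^3R-[3]_qL^2RL+[3]_qLRL^2-RL^3=(q-q^{-1})(q^2-q^{-2})(q^3-q^{-3})\,(bb^*K_0L^2K_0-cc^*K_1L^2K_1).$$
   Context: Let $\mathbb F$ be an algebraically closed field and fix nonzero $q\in\mathbb F$ with $q^2\ne1$; write $[n]_q=(q^n-q^{-n})/(q-q^{-1})$. $U_q(\widehat{\mathfrak{sl}}_2)$ is the associative unital $\mathbb F$-algebra with generators $e_i^{\pm},K_i^{\pm1}$ ($i\in\{0,1\}$) and relations $K_iK_i^{-1}=K_i^{-1}K_i=1$, $K_0K_1=K_1K_0$, $K_ie_i^{\pm}K_i^{-1}=q^{\pm2}e_i^{\pm}$, $K_ie_j^{\pm}K_i^{-1}=q^{\mp2}e_j^{\pm}$ ($i\ne j$), $e_i^+e_i^--e_i^-e_i^+=(K_i-K_i^{-1})/(q-q^{-1})$, $e_0^{\pm}e_1^{\mp}=e_1^{\mp}e_0^{\pm}$, and $(e_i^\pm)^3e_j^\pm-[3]_q(e_i^\pm)^2e_j^\pm e_i^\pm+[3]_qe_i^\pm e_j^\pm(e_i^\pm)^2-e_j^\pm(e_i^\pm)^3=0$ ($i\ne j$). $U_q(L(\mathfrak{sl}_2))$ is the quotient of $U_q(\widehat{\mathfrak{sl}}_2)$ by the two-sided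 ideal generated by $K_0K_1-1$; elements are denoted by the same symbols as their images. Fix nonzero $b,c,b^*,c^*\in\mathbb F$ and $u,v,u^*,v^*\in\mathbb F$ with $uv^*=-bb^*q^{-1}(q-q^{-1})^2$ and $vu^*=-cc^*q^{-1}(q-q^{-1})^2$; set $R=ue_0^++ve_1^-K_1$ and $L=u^*e_1^++v^*e_0^-K_0$. *)

From HB Require Import structures.
From mathcomp Require Import all_boot all_order all_algebra.
Set Implicit Arguments. Unset Strict Implicit. Unset Printing Implicit Defensive.
Import GRing.Theory.
Local Open Scope ring_scope.

Definition qint (F : fieldType) (q : F) (n : nat) : F :=
  (q ^+ n - q ^- n) / (q - q^-1).

Definition qserre (F : fieldType) (A : algType F) (q : F) (x y : A) : A :=
  x ^+ 3 * y - qint q 3 *: (x ^+ 2 * y * x) + qint q 3 *: (x * y * x ^+ 2)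
  - y * x ^+ 3.

(* The defining relations of U_q(L(sl_2)): elements e0p = e_0^+, e0m = e_0^-,
   e1p = e_1^+, e1m = e_1^-, K0, K1 and K0i = K_0^{-1}, K1i = K_1^{-1}
   of an F-algebra A satisfying all relations of U_q(\hat{sl}_2) together with
   K_0 K_1 = 1. *)
Definition UqLsl2_rel (F : fieldType) (A : algType F) (q : F)
  (e0p e0m e1p e1m K0 K1 K0i K1i : A) : Prop :=
  ([/\ [/\ K0 * K0i = 1, K0i * K0 = 1, K1 * K1i = 1, K1i * K1 = 1
        & K0 * K1 = K1 * K0],
      [/\ K0 * e0p * K0i = q ^+ 2 *: e0p, K0 * e0m * K0i = q ^- 2 *: e0m,
          K1 * e1p * K1i = q ^+ 2 *: e1p & K1 * e1m * K1i = q ^- 2 *: e1m],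
      [/\ K0 * e1p * K0i = q ^- 2 *: e1p, K0 * e1m * K0i = q ^+ 2 *: e1m,
          K1 * e0p * K1i = q ^- 2 *: e0p & K1 * e0m * K1i = q ^+ 2 *: e0m],
      [/\ e0p * e0m - e0m * e0p = (q - q^-1)^-1 *: (K0 - K0i),
          e1p * e1m - e1m * e1p = (q - q^-1)^-1 *: (K1 - K1i),
          e0p * e1m = e1m * e0p & e0m * e1p = e1p * e0m] &
      [/\ qserre q e0p e1p = 0, qserre q e1p e0p = 0,
          qserre q e0m e1m = 0 & qserre q e1m e0m = 0]]
   /\ K0 * K1 = 1).

From HB Require Import structures.
From mathcomp Require Import all_boot all_order all_algebra.
From mathcomp Require Import ring.
Set Implicit Arguments. Unset Strict Implicit. Unset Printing Implicit Defensive.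
Import GRing.Theory.
Local Open Scope ring_scope.

(* Both identities are polynomial identities in the noncommuting generators
   e0+, e0-, e1+, e1-, K0, K1 of U_q(L(sl_2)), so they can be decided by
   normalising words.  Second, we orient the
   defining relations (K's moved to the right, a Serre relation solved for
   its leading word) into two valid rewriting systems.  Third, qserre q R _
   is additive, so the first identity splits into the contributions of
   u^* e1+ and v^* e0- K0; each is closed by running the normaliser and
   checking the coefficients with [field], and the hypotheses on u v^* and
   v u^* identify the resulting scalars with b b^* and c c^*.  The second
   identity is the first one after the diagram automorphism exchanging the
   indices 0 and 1. *)

Inductive cexp :=
  | CV of nat | C1 | CAdd of cexp & cexp | CMul of cexp & cexp
  | COpp of cexp | CInv of cexp.

(* A word is a list of generator indices; a linear combination of words is a
   list of (coefficient, word) terms; a rewriting rule replaces a word by a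
   linear combination. *)
Definition term := (cexp * seq nat)%type.
Definition rule := (seq nat * seq term)%type.

Definition lscale (c : cexp) (l : seq term) : seq term :=
  map (fun t => (CMul c t.1, t.2)) l.
Definition lmul (l1 l2 : seq term) : seq term :=
  flatten (map (fun t1 => map (fun t2 => (CMul t1.1 t2.1, t1.2 ++ t2.2)) l2) l1).
Definition lgen (i : nat) : seq term := [:: (C1, [:: i])].

Fixpoint find_rule (rs : seq rule) (w : seq nat) : option rule :=
  if rs is r :: rs' then
    if take (size r.1) w == r.1 then Some r else find_rule rs' w
  else None.

Fixpoint rewrite_word (rs : seq rule) (w : seq nat) : option (seq term) :=
  match find_rule rs w with
  | Some r => Some (map (fun t => (t.1, t.2 ++ drop (size r.1) w)) r.2)
  | None => if w is x :: w' then
              omap (map (fun t => (t.1, x :: t.2))) (rewrite_word rs w')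
            else None
  end.

Definition rewrite_step (rs : seq rule) (l : seq term) : seq term :=
  flatten (map (fun t => if rewrite_word rs t.2 is Some l' then lscale t.1 l'
                         else [:: t]) l).
Fixpoint rewrite_iter (rs : seq rule) (n : nat) (l : seq term) : seq term :=
  if n is n'.+1 then rewrite_iter rs n' (rewrite_step rs l) else l.

Fixpoint insert_term (t : term) (acc : seq term) : seq term :=
  if acc is s :: acc' then
    if s.2 == t.2 then (CAdd s.1 t.1, s.2) :: acc' else s :: insert_term t acc'
  else [:: t].
Definition collect (l : seq term) : seq term := foldr insert_term [::] l.

Definition normal_form (rs : seq rule) (n : nat) (l : seq term) : seq term :=
  collect (rewrite_iter rs n l).

Definition serre_sym (c3 : cexp) (X Y : seq term) : seq term :=
  let X2 := lmul X X in let X3 := lmul X X2 in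
  lmul X3 Y ++ lscale (COpp C1) (lscale c3 (lmul (lmul X2 Y) X)) ++
  lscale c3 (lmul (lmul X Y) X2) ++ lscale (COpp C1) (lmul Y X3).

Section Semantics.
Variables (F : fieldType) (A : algType F) (env : seq F) (gens : seq A).

Fixpoint ceval (e : cexp) : F :=
  match e with
  | CV i => nth 0 env i
  | C1 => 1
  | CAdd a b => ceval a + ceval b
  | CMul a b => ceval a * ceval b
  | COpp a => - ceval a
  | CInv a => (ceval a)^-1
  end.

Definition wval (w : seq nat) : A := foldr (fun i acc => nth 0 gens i * acc) 1 w.

Fixpoint lval (l : seq term) : A :=
  if l is t :: l' then ceval t.1 *: wval t.2 + lval l' else 0.

Fixpoint valid (rs : seq rule) : Prop :=
  if rs is r :: rs' then wval r.1 = lval r.2 /\ valid rs' else True.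

Fixpoint coefs_zero (l : seq term) : Prop :=
  if l is t :: l' then ceval t.1 = 0 /\ coefs_zero l' else True.

Lemma valid_cat rs1 rs2 : valid rs1 -> valid rs2 -> valid (rs1 ++ rs2).
Proof. by elim: rs1 => //= r rs IH [h1 h2] h; split; last exact: IH. Qed.

Lemma wval_cat w1 w2 : wval (w1 ++ w2) = wval w1 * wval w2.
Proof. by elim: w1 => [|i w IH] /=; rewrite ?mul1r // IH mulrA. Qed.

Lemma lval_cat l1 l2 : lval (l1 ++ l2) = lval l1 + lval l2.
Proof. by elim: l1 => [|t l IH] /=; rewrite ?add0r // IH addrA. Qed.

Lemma lval_scale c l : lval (lscale c l) = ceval c *: lval l.
Proof. by elim: l => [|t l IH] /=; rewrite ?scaler0 // IH scalerDr scalerA. Qed.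

Lemma lval_append l s :
  lval (map (fun t => (t.1, t.2 ++ s)) l) = lval l * wval s.
Proof.
by elim: l => [|t l IH] /=; rewrite ?mul0r // IH wval_cat mulrDl scalerAl.
Qed.

Lemma lval_prepend x l :
  lval (map (fun t => (t.1, x :: t.2)) l) = nth 0 gens x * lval l.
Proof. by elim: l => [|t l IH] /=; rewrite ?mulr0 // IH mulrDr scalerAr. Qed.

Lemma lval_mul l1 l2 : lval (lmul l1 l2) = lval l1 * lval l2.
Proof.
rewrite /lmul; elim: l1 => [|t1 l1 IH] /=; first by rewrite mul0r.
rewrite lval_cat IH mulrDl; congr (_ + _); clear IH.
elim: l2 => [|t2 l2 IH2] /=; first by rewrite mulr0.
by rewrite IH2 mulrDr wval_cat -scalerA scalerAr scalerAl.
Qed.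

Lemma lval_gen i : lval (lgen i) = nth 0 gens i.
Proof. by rewrite /= scale1r mulr1 addr0. Qed.

Lemma lval_serre q c3 X Y : ceval c3 = qint q 3 ->
  lval (serre_sym c3 X Y) = qserre q (lval X) (lval Y).
Proof.
move=> hc3; rewrite /serre_sym /qserre !lval_cat !lval_scale !lval_mul hc3 /=.
by rewrite !scaleN1r !addrA !exprS expr0 !mulr1.
Qed.

Section Soundness.
Variable rs : seq rule.
Hypothesis rs_valid : valid rs.

Lemma find_ruleP w r : find_rule rs w = Some r ->
  wval w = lval r.2 * wval (drop (size r.1) w).
Proof.
elim: rs rs_valid => [|r0 rs' IH] //= [h0 hv].
case: ifP => [/eqP htake [<-]|_ /(IH hv) //].
by rewrite -[in LHS](cat_take_drop (size r0.1) w) wval_cat htake h0.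
Qed.

Lemma rewrite_wordP w l : rewrite_word rs w = Some l -> lval l = wval w.
Proof.
elim: w l => [|x w IH] l /=; case E: (find_rule rs _) => [r|] //=.
- by move=> [<-]; rewrite lval_append -(find_ruleP E).
- by move=> [<-]; rewrite lval_append -(find_ruleP E).
- by case E': (rewrite_word rs w) => [l'|] //= [<-]; rewrite lval_prepend IH.
Qed.

Lemma rewrite_stepP l : lval (rewrite_step rs l) = lval l.
Proof.
rewrite /rewrite_step; elim: l => [|t l IH] //=.
rewrite lval_cat IH; case E: (rewrite_word rs t.2) => [l'|] /=.
  by rewrite lval_scale (rewrite_wordP E).
by rewrite addr0.
Qed.

Lemma lval_insert t acc : lval (insert_term t acc) = lval (t :: acc).
Proof.
elim: acc => [|s acc IH] //=; case: eqP => [-> | _] /=.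
  by rewrite scalerDl -addrA addrCA.
by rewrite IH /= addrCA.
Qed.

Lemma normal_formP n l : lval (normal_form rs n l) = lval l.
Proof.
rewrite /normal_form; elim: n l => [|n IH] l /=.
  by elim: l => //= t l IHl; rewrite lval_insert /= IHl.
by rewrite IH rewrite_stepP.
Qed.

Lemma coefs_zero_lval l : coefs_zero l -> lval l = 0.
Proof. by elim: l => //= t l IH [-> /IH ->]; rewrite scale0r addr0. Qed.

Theorem normal_form_eq n P Q :
  coefs_zero (normal_form rs n (P ++ lscale (COpp C1) Q)) -> lval P = lval Q.
Proof.
move/coefs_zero_lval; rewrite normal_formP lval_cat lval_scale /= scaleN1r.
by move/eqP; rewrite subr_eq0 => /eqP.
Qed.

End Soundness.
End Semantics.

Arguments ceval : simpl never.

Lemma conj_commute (F : fieldType) (A : algType F) (K Ki x : A) (c : F) :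
  Ki * K = 1 -> K * x * Ki = c *: x -> K * x = c *: (x * K).
Proof. by move=> hKi hconj; rewrite -[K * x]mulr1 -hKi mulrA hconj scalerAl. Qed.

(* A vanishing q-Serre expression, solved for its leading word x^3 y
   (products associated to the right, as words are evaluated). *)
Lemma serre_lead (F : fieldType) (A : algType F) (q : F) (x y : A) :
  qserre q x y = 0 ->
  x * (x * (x * y)) = qint q 3 *: (x * (x * (y * x)))
                      - qint q 3 *: (x * (y * (x * x))) + y * (x * (x * x)).
Proof.
rewrite /qserre !exprS expr0 !mulr1 -!mulrA => hserre.
by apply/eqP; rewrite -subr_eq0 -hserre !opprD opprK !addrA.
Qed.

Lemma qserreD (F : fieldType) (A : algType F) (q : F) (x y z : A) :
  qserre q x (y + z) = qserre q x y + qserre q x z.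
Proof.
rewrite /qserre !(mulrDr, mulrDl) !scalerDr !opprD.
set a := x ^+ 3 * y; set b := qint q 3 *: (x ^+ 2 * y * x).
set c := qint q 3 *: (x * y * x ^+ 2).
by rewrite (addrACA a) (addrACA (a - b)) (addrACA (a - b + c)).
Qed.

Lemma UqLsl2_swap (F : fieldType) (A : algType F) (q : F)
    (e0p e0m e1p e1m K0 K1 K0i K1i : A) :
  UqLsl2_rel q e0p e0m e1p e1m K0 K1 K0i K1i ->
  UqLsl2_rel q e1p e1m e0p e0m K1 K0 K1i K0i.
Proof.
case=> [[[hK0 hK0' hK1 hK1' hK01] [c00p c00m c11p c11m] [c01p c01m c10p c10m]
  [hcomm0 hcomm1 h01 h10] [s01 s10 s0m s1m]] hK01_1].
split; last by rewrite -hK01.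
by split; split=> //; rewrite ?h01 ?h10.
Qed.

(* Generators are numbered e0+ = 0, e0- = 1, e1+ = 2, e1- = 3, K0 = 4,
   K1 = 5; the parameters of the coefficients are q, u, v, u^*, v^*. *)
Definition c_q : cexp := CV 0.
Definition c_q2 : cexp := CMul c_q c_q.
Definition c_q3 : cexp := CMul c_q c_q2.
Definition c_d : cexp := CAdd c_q (COpp (CInv c_q)).
Definition c_qint3 : cexp := CMul (CAdd c_q3 (COpp (CInv c_q3))) (CInv c_d).
Definition c_k : cexp :=
  CMul (CMul c_d (CAdd c_q2 (COpp (CInv c_q2)))) (CAdd c_q3 (COpp (CInv c_q3))).
(* The values of c c^* and b b^* forced by the hypotheses on v u^* and u v^*. *)
Definition c_cc : cexp := COpp (CMul (CMul (CMul (CV 2) (CV 3)) c_q) (CInv (CMul c_d c_d))).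
Definition c_bb : cexp := COpp (CMul (CMul (CMul (CV 1) (CV 4)) c_q) (CInv (CMul c_d c_d))).

Definition K_rule (k i : nat) (c : cexp) : rule := ([:: k; i], [:: (c, [:: i; k])]).
Definition K_rules : seq rule :=
  [:: K_rule 4 0 c_q2; K_rule 4 1 (CInv c_q2); K_rule 4 2 (CInv c_q2);
      K_rule 4 3 c_q2; K_rule 5 0 (CInv c_q2); K_rule 5 1 c_q2;
      K_rule 5 2 c_q2; K_rule 5 3 (CInv c_q2);
      ([:: 4; 5], [:: (C1, [::])]); ([:: 5; 4], [:: (C1, [::])])].

Definition serre_rule (x y : nat) : rule :=
  ([:: x; x; x; y], [:: (c_qint3, [:: x; x; y; x]);
                       (COpp c_qint3, [:: x; y; x; x]); (C1, [:: y; x; x; x])]).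

Definition rules_e1p : seq rule := K_rules ++
  [:: ([:: 3; 0], [:: (C1, [:: 0; 3])]);
      ([:: 3; 2], [:: (C1, [:: 2; 3]); (COpp (CInv c_d), [:: 5]); (CInv c_d, [:: 4])]);
      serre_rule 0 2].

Definition rules_e0m : seq rule := K_rules ++
  [:: ([:: 0; 3], [:: (C1, [:: 3; 0])]);
      ([:: 0; 1], [:: (C1, [:: 1; 0]); (CInv c_d, [:: 4]); (COpp (CInv c_d), [:: 5])]);
      serre_rule 3 1].

Section Relations.
Variables (F : fieldType) (A : algType F) (q u v us vs : F).
Variables (e0p e0m e1p e1m K0 K1 K0i K1i : A).
Hypothesis hrel : UqLsl2_rel q e0p e0m e1p e1m K0 K1 K0i K1i.

Let env := [:: q; u; v; us; vs].
Let gens := [:: e0p; e0m; e1p; e1m; K0; K1].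

Lemma K_inverses : K0i = K1 /\ K1i = K0.
Proof.
case: hrel => [[[hK0 hK0' hK1 hK1' _] _ _ _ _] hK01].
split; first by rewrite -[K0i]mulr1 -hK01 mulrA hK0' mul1r.
by rewrite -[K1i]mul1r -hK01 -mulrA hK1 mulr1.
Qed.

(* The K-commutation rules hold, by conjugating with K and using K0 K1 = 1. *)
Lemma valid_K_rules : valid env gens K_rules.
Proof.
case: hrel => [[[hK0 hK0' hK1 hK1' hK01] [c00p c00m c11p c11m]
  [c01p c01m c10p c10m] _ _] hK01_1].
rewrite /= !mulr1 !addr0 ?scale1r /ceval /= -!expr2 -hK01.
by do !split=> //; first [apply: (conj_commute hK0') | apply: (conj_commute hK1')].
Qed.

(* The commutation relations [e0+, e1-] = 0, [e1+, e1-] = (K1 - K0)/(q - q^-1)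
   and the Serre relation for (e0+, e1+) validate [rules_e1p]. *)
Lemma valid_rules_e1p : valid env gens rules_e1p.
Proof.
apply: valid_cat; first exact: valid_K_rules.
case: hrel => [[_ _ _ [_ hcomm1 h01 _] [hserre _ _ _]] _].
have [_ hK1i] := K_inverses.
rewrite /= !mulr1 !addr0 /ceval /= !scale1r h01; split=> //; split.
  have -> : e1m * e1p = e1p * e1m - (e1p * e1m - e1m * e1p) by rewrite subKr.
  by rewrite hcomm1 hK1i scalerBr opprD opprK scaleNr.
by rewrite (serre_lead hserre) scaleNr addrA /qint !exprS expr0 !mulr1.
Qed.

Lemma valid_rules_e0m : valid env gens rules_e0m.
Proof.
apply: valid_cat; first exact: valid_K_rules.
case: hrel => [[_ _ _ [hcomm0 _ h01 _] [_ _ _ hserre]] _].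
have [hK0i _] := K_inverses.
rewrite /= !mulr1 !addr0 /ceval /= !scale1r -h01; split=> //; split.
  have -> : e0p * e0m = e0m * e0p + (e0p * e0m - e0m * e0p) by rewrite addrC subrK.
  by rewrite hcomm0 hK0i scalerBr scaleNr.
by rewrite (serre_lead hserre) scaleNr addrA /qint !exprS expr0 !mulr1.
Qed.

End Relations.

Definition R_sym : seq term :=
  lscale (CV 1) (lgen 0) ++ lscale (CV 2) (lmul (lgen 3) (lgen 5)).
Definition L1_sym : seq term := lscale (CV 3) (lgen 2).
Definition L0_sym : seq term := lscale (CV 4) (lmul (lgen 1) (lgen 4)).

Ltac normalise_coefficients rs_valid :=
  apply: (normal_form_eq (n := 30) rs_valid);
  match goal with |- coefs_zero _ ?L =>
    let r := eval vm_compute in L in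
    rewrite (_ : L = r); last by vm_compute
  end;
  rewrite /=; do !split; rewrite /ceval /=; field.

Section Computation.
Variables (F : fieldType) (A : algType F) (q u v us vs : F).
Hypotheses (hq0 : q != 0) (hq2 : q ^+ 2 != 1).
Variables (e0p e0m e1p e1m K0 K1 K0i K1i : A).
Hypothesis hrel : UqLsl2_rel q e0p e0m e1p e1m K0 K1 K0i K1i.

Let env := [:: q; u; v; us; vs].
Let gens := [:: e0p; e0m; e1p; e1m; K0; K1].
Let R := u *: e0p + v *: (e1m * K1).
Let k := (q - q^-1) * (q ^+ 2 - q ^- 2) * (q ^+ 3 - q ^- 3).

(* The only denominators occurring: q and q^2 - 1. *)
Lemma q2_sub1_neq0 : q * q - 1 != 0.
Proof. by rewrite -expr2 subr_eq0. Qed.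

Lemma lval_R : lval env gens R_sym = R.
Proof. by rewrite lval_cat !lval_scale lval_mul !lval_gen. Qed.

Lemma lval_KR2K (c : cexp) (i : nat) :
  ceval env c *: (nth 0 gens i * R ^+ 2 * nth 0 gens i) =
  lval env gens (lscale c (lmul (lmul (lgen i) (lmul R_sym R_sym)) (lgen i))).
Proof. by rewrite lval_scale !lval_mul !lval_gen lval_R expr2. Qed.

Lemma lval_serre_R (Y : seq term) :
  qserre q R (lval env gens Y) = lval env gens (serre_sym c_qint3 R_sym Y).
Proof.
by rewrite -lval_R -(lval_serre (c3 := c_qint3) gens R_sym Y).
Qed.

Lemma serre_R_e1p :
  qserre q R (us *: e1p) = ceval env (CMul c_k c_cc) *: (K1 * R ^+ 2 * K1).
Proof.
rewrite (lval_KR2K _ 5) (_ : us *: e1p = lval env gens L1_sym); last first.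
  by rewrite lval_scale lval_gen.
rewrite lval_serre_R; normalise_coefficients (valid_rules_e1p u v us vs hrel).
all: by rewrite ?hq0 ?q2_sub1_neq0.
Qed.

Lemma serre_R_e0m :
  qserre q R (vs *: (e0m * K0)) =
  ceval env (COpp (CMul c_k c_bb)) *: (K0 * R ^+ 2 * K0).
Proof.
rewrite (lval_KR2K _ 4) (_ : vs *: (e0m * K0) = lval env gens L0_sym); last first.
  by rewrite lval_scale lval_mul !lval_gen.
rewrite lval_serre_R; normalise_coefficients (valid_rules_e0m u v us vs hrel).
all: by rewrite ?hq0 ?q2_sub1_neq0.
Qed.

Lemma coef_cc (c cs : F) : v * us = - c * cs * q^-1 * (q - q^-1) ^+ 2 ->
  ceval env (CMul c_k c_cc) = k * (c * cs).
Proof.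
move=> hvu; rewrite /ceval /= hvu /k.
by field; rewrite hq0 q2_sub1_neq0.
Qed.

Lemma coef_bb (b bs : F) : u * vs = - b * bs * q^-1 * (q - q^-1) ^+ 2 ->
  ceval env (CMul c_k c_bb) = k * (b * bs).
Proof.
move=> huv; rewrite /ceval /= huv /k.
by field; rewrite hq0 q2_sub1_neq0.
Qed.

Lemma serre_R_L (b c bs cs : F)
    (huv : u * vs = - b * bs * q^-1 * (q - q^-1) ^+ 2)
    (hvu : v * us = - c * cs * q^-1 * (q - q^-1) ^+ 2) :
  qserre q R (us *: e1p + vs *: (e0m * K0)) =
  k *: ((c * cs) *: (K1 * R ^+ 2 * K1) - (b * bs) *: (K0 * R ^+ 2 * K0)).
Proof.
have coef_neg_bb : ceval env (COpp (CMul c_k c_bb)) = - (k * (b * bs)).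
  by rewrite -(coef_bb huv).
rewrite qserreD serre_R_e1p serre_R_e0m (coef_cc hvu) coef_neg_bb.
by rewrite scalerBr !scalerA scaleNr.
Qed.

End Computation.

Theorem lemma6p5 (F : closedFieldType) (q : F)
  (hq0 : q != 0) (hq2 : q ^+ 2 != 1)
  (b c bs cs u v us vs : F)
  (hb : b != 0) (hc : c != 0) (hbs : bs != 0) (hcs : cs != 0)
  (huv : u * vs = - b * bs * q^-1 * (q - q^-1) ^+ 2)
  (hvu : v * us = - c * cs * q^-1 * (q - q^-1) ^+ 2)
  (A : algType F) (e0p e0m e1p e1m K0 K1 K0i K1i : A)
  (hrel : UqLsl2_rel q e0p e0m e1p e1m K0 K1 K0i K1i) :
  let R := u *: e0p + v *: (e1m * K1) in
  let L := us *: e1p + vs *: (e0m * K0) in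
  let k := (q - q^-1) * (q ^+ 2 - q ^- 2) * (q ^+ 3 - q ^- 3) in
  qserre q R L = k *: ((c * cs) *: (K1 * R ^+ 2 * K1) - (b * bs) *: (K0 * R ^+ 2 * K0))
  /\
  qserre q L R = k *: ((b * bs) *: (K0 * L ^+ 2 * K0) - (c * cs) *: (K1 * L ^+ 2 * K1)).
Proof.
move=> R L k; split; first exact: (serre_R_L hq0 hq2 hrel huv hvu).
(* Exchanging the indices 0 and 1 turns L into the R of the swapped
   generators, with u^* and v^* in the roles of u and v. *)
have hvu' : us * v = - c * cs * q^-1 * (q - q^-1) ^+ 2 by rewrite mulrC.
have huv' : vs * u = - b * bs * q^-1 * (q - q^-1) ^+ 2 by rewrite mulrC.
exact: (serre_R_L hq0 hq2 (UqLsl2_swap hrel) hvu' huv').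
Qed.
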